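(* Let $\Gamma_1$ and $\Gamma_2$ be isomorphic finite connected graphs with vertices $p_1,\dots,p_n$ and $q_1,\dots,q_n$ respectively, $p_i$ corresponding to $q_i$. Let $\Gamma_0$ be the graph obtained from the disjoint union of $\Gamma_1$ and $\Gamma_2$ by additionally joining $p_i$ with $q_j$ by an edge whenever $p_j\sim p_i$. If $\lambda_1,\dots,\lambda_n$ are the eigenvalues (with multiplicity) of the normalized Laplacian of $\Gamma_1$ (equivalently of $\Gamma_2$), then the eigenvalues of the normalized Laplacian of $\Gamma_0$ are $\lambda_1,\dots,\lambda_n$ together with the eigenvalue $1$ with multiplicity $n$.
   Context: For a finite simple graph without isolated vertices, write $i\sim j$ for adjacency and $n_i$ for the degree of $i$. The normalized Laplacian acts on real functions $v$ on the vertices by $\Delta v(i)=v(i)-\frac{1}{n_i}\sum_{j\sim i}v(j)$; $\lambda$ is an eigenvalue with eigenfunction $u$ if $u\not\equiv 0$ and $\frac{1}{n_i}\sum_{j\sim i}u(j)=(1-\lambda)u(i)$ for all $i$. A graph with $N$ vertices has $N$ eigenvalues counted with multiplicity. *)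

From mathcomp Require Import all_boot all_order all_algebra.
Set Implicit Arguments. Unset Strict Implicit. Unset Printing Implicit Defensive.
Import Order.TTheory GRing.Theory Num.Theory.
Local Open Scope ring_scope.

Definition simple_graph (N : nat) (e : rel 'I_N) : Prop :=
  symmetric e /\ irreflexive e.

Definition connected_graph (N : nat) (e : rel 'I_N) : Prop :=
  forall i j : 'I_N, connect e i j.

Definition no_isolated (N : nat) (e : rel 'I_N) : Prop :=
  forall i : 'I_N, exists j, e i j.

Definition degree (N : nat) (e : rel 'I_N) (i : 'I_N) : nat := #|[set j | e i j]|.

Definition norm_laplacian (R : fieldType) (N : nat) (e : rel 'I_N) : 'M[R]_N :=
  \matrix_(i, j) ((i == j)%:R - (e i j)%:R / (degree e i)%:R).

Definition eigenvalues_mult (R : fieldType) (N : nat) (A : 'M[R]_N) (s : seq R) : Prop :=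
  char_poly A = \prod_(l <- s) ('X - l%:P).

(* Gamma_0: vertices 'I_(n+n); lshift i = p_i (copy Gamma_1), rshift j = q_j
   (copy Gamma_2, identified with Gamma_1 via p_i <-> q_i).
   p_i ~ p_j iff e i j; q_i ~ q_j iff e i j; p_i ~ q_j iff p_j ~ p_i. *)
Definition double_graph (n : nat) (e : rel 'I_n) : rel 'I_(n + n) :=
  fun a b =>
    match split a, split b with
    | inl i, inl j => e i j
    | inr i, inr j => e i j
    | inl i, inr j => e j i
    | inr i, inl j => e i j
    end.

(* The normalized Laplacian of Gamma_0 is the block matrix [[A, C], [C, A]]
   with A = 1 - W/2 and C = -W/2, where W is the random-walk matrix of Gamma_1:
   every vertex of Gamma_0 has twice its degree in Gamma_1 and sees each
   neighbour of Gamma_1 once in each copy.  Such a symmetric block matrix has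
   characteristic polynomial char(A + C) * char(A - C), and here A + C is the
   normalized Laplacian of Gamma_1 while A - C is the identity. *)

From mathcomp Require Import all_boot all_order all_algebra.
Set Implicit Arguments. Unset Strict Implicit. Unset Printing Implicit Defensive.
Import Order.TTheory GRing.Theory Num.Theory.
Local Open Scope ring_scope.

Lemma det_block_mx_sym (R : comNzRingType) (m : nat) (X Y : 'M[R]_m) :
  \det (block_mx X Y Y X) = \det (X + Y) * \det (X - Y).
Proof.
have triangularize : block_mx 1%:M 1%:M 0 1%:M *m block_mx X Y Y X
                       *m block_mx 1%:M (-1%:M) 0 1%:M
                     = block_mx (X + Y) 0 Y (X - Y).
  rewrite !mulmx_block !mul1mx !mul0mx ?add0r ?addr0 !mulmxN !mulmx0 !mulmx1 ?addr0 ?add0r.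
  by rewrite (addrC Y X) addNr (addrC (- Y)).
by rewrite -(det_lblock _ Y) -triangularize !det_mulmx !det_ublock !det1 !mul1r mulr1.
Qed.

Lemma char_poly_block_mx_sym (R : comNzRingType) (m : nat) (A C : 'M[R]_m) :
  char_poly (block_mx A C C A) = char_poly (A + C) * char_poly (A - C).
Proof.
have block_char : char_poly_mx (block_mx A C C A)
    = block_mx (char_poly_mx A) (- map_mx polyC C) (- map_mx polyC C) (char_poly_mx A).
  by rewrite /char_poly_mx map_block_mx (scalar_mx_block m m) opp_block_mx add_block_mx
             sub0r.
rewrite /char_poly block_char det_block_mx_sym /char_poly_mx.
by rewrite !raddfD !raddfN /= !addrA.
Qed.

Lemma char_poly_scalar (R : comNzRingType) (m : nat) (a : R) :
  char_poly (a%:M : 'M_m) = ('X - a%:P) ^+ m.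
Proof.
rewrite /char_poly /char_poly_mx -det_scalar; congr (\det _).
by apply/matrixP => i j; rewrite !mxE; case: (i == j); rewrite ?mulr1n ?mulr0n ?subr0.
Qed.

Lemma prodr_nseq (R : pzSemiRingType) (I : Type) (m : nat) (a : I) (F : I -> R) :
  \prod_(i <- nseq m a) F i = F a ^+ m.
Proof. by rewrite big_nseq; elim: m => //= m ->; rewrite exprS. Qed.

Lemma split_lshift (m n : nat) (i : 'I_m) : split (lshift n i) = inl i.
Proof. exact: (unsplitK (inl _ i)). Qed.

Lemma split_rshift (m n : nat) (i : 'I_n) : split (rshift m i) = inr i.
Proof. exact: (unsplitK (inr _ i)). Qed.

Section DoubleGraph.

Variables (R : fieldType) (n : nat) (e : rel 'I_n).

Lemma degree_double_graph_lshift (i : 'I_n) : symmetric e ->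
  degree (double_graph e) (lshift n i) = (degree e i * 2)%N.
Proof.
move=> e_sym; rewrite /degree -!sum1_card big_split_ord /= /double_graph.
under eq_bigl do rewrite inE !split_lshift.
under [X in (_ + X)%N]eq_bigl do rewrite inE split_lshift split_rshift e_sym.
by rewrite muln2 -addnn; congr (_ + _); apply: eq_bigl => j; rewrite inE.
Qed.

Lemma degree_double_graph_rshift (i : 'I_n) :
  degree (double_graph e) (rshift n i) = (degree e i * 2)%N.
Proof.
rewrite /degree -!sum1_card big_split_ord /= /double_graph.
under eq_bigl do rewrite inE split_rshift split_lshift.
under [X in (_ + X)%N]eq_bigl do rewrite inE !split_rshift.
by rewrite muln2 -addnn; congr (_ + _); apply: eq_bigl => j; rewrite inE.
Qed.

Definition walk_mx : 'M[R]_n := \matrix_(i, j) ((e i j)%:R / (degree e i)%:R).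

Lemma norm_laplacianE : norm_laplacian R e = 1%:M - walk_mx.
Proof. by apply/matrixP => i j; rewrite !mxE. Qed.

Definition half_walk_mx : 'M[R]_n := 2^-1 *: walk_mx.

Lemma half_walk_mx_double : (2 : R) != 0 -> half_walk_mx + half_walk_mx = walk_mx.
Proof. by move=> two_neq0; rewrite -scalerDl -mulr2n -[_ *+ 2]mulr_natr mulVf // scale1r. Qed.

Lemma norm_laplacian_double_graph : symmetric e ->
  norm_laplacian R (double_graph e)
  = block_mx (1%:M - half_walk_mx) (- half_walk_mx) (- half_walk_mx) (1%:M - half_walk_mx).
Proof.
move=> e_sym; apply/matrixP => a b.
rewrite -(splitK a) -(splitK b).
case: (split a) => i; case: (split b) => j /=;
  rewrite ?block_mxEul ?block_mxEur ?block_mxEdl ?block_mxEdr !mxE ?eq_shift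
    /double_graph ?split_lshift ?split_rshift ?degree_double_graph_lshift
    ?degree_double_graph_rshift // natrM invfM mulrA [_ * 2^-1]mulrC ?(e_sym j i) //.
all: by rewrite sub0r.
Qed.

End DoubleGraph.

Theorem theorem4 (R : realFieldType) (n : nat) (e : rel 'I_n)
  (hsimple : simple_graph e) (hconn : connected_graph e) (hiso : no_isolated e)
  (s : seq R) :
  eigenvalues_mult (norm_laplacian R e) s ->
  eigenvalues_mult (norm_laplacian R (double_graph e)) (s ++ nseq n 1).
Proof.
rewrite /eigenvalues_mult => char_L.
have [e_sym _] := hsimple.
rewrite norm_laplacian_double_graph // char_poly_block_mx_sym.
rewrite -addrA -opprD half_walk_mx_double ?pnatr_eq0 // -norm_laplacianE.
by rewrite opprK subrK char_poly_scalar char_L big_cat prodr_nseq.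
Qed.
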